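(* There exist $\mathtt r_0,\mathtt c_*>0$ such that, for any $0<\mathtt r\le\mathtt r_0$ and any choice of tangential sites $S^+=\{\overline{\jmath}_1,\dots,\overline{\jmath}_\nu\}\in\mathcal V(\mathtt r)$, the $\nu\times\nu$ matrix $$\mathbb A:=\frac12\mathbb D\,\mathrm{diag}\Big(\frac{\lambda(2j)}{2\lambda(j)-\lambda(2j)}\Big)_{j\in S^+}+\mathbb D\,\mathbb B,\qquad \mathbb D:=\mathrm{diag}(\lambda(j))_{j\in S^+},$$ with $\mathbb B_j^k=\mathtt b_{jk}$ for $j\ne k$ and $\mathbb B_j^j=0$, where $$\mathtt b_{jk}=\frac23\frac{(1+k^2)(1+j^2)(2+k^2+j^2)}{(3+k^2+j^2+kj)(3+k^2+j^2-kj)},$$ satisfies $|\det\mathbb A|\ge\mathtt c_*\,\overline{\jmath}_1^{\,3\nu}$.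
   Context: $\nu\ge2$ is fixed, $\lambda(j)=j\frac{4+j^2}{1+j^2}$. For $\mathtt r\in(0,1)$, a set $S^+=\{\overline{\jmath}_1,\dots,\overline{\jmath}_\nu\}$ of $\nu$ distinct positive integers with $\overline{\jmath}_1=\max_i\overline{\jmath}_i$ belongs to $\mathcal V(\mathtt r)$ if $\min_i\overline{\jmath}_i>1/\mathtt r$, $|\overline{\jmath}_i/\overline{\jmath}_1-1|\le\mathtt r$ for all $i$, and $\sum_i\frac{\overline{\jmath}_i}{1+\overline{\jmath}_i^2}\ell_i\ne0$ for all $\ell\in\mathbb{Z}^\nu$ with $\sum_i|\ell_i|=4$. The rows and columns of $\mathbb A$ are indexed by $S^+$. *)

From mathcomp Require Import all_boot all_order all_algebra.
Set Implicit Arguments. Unset Strict Implicit. Unset Printing Implicit Defensive.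
Import Order.TTheory GRing.Theory Num.Theory.
Local Open Scope ring_scope.

Definition lam {R : realFieldType} (j : R) : R := j * (4 + j ^+ 2) / (1 + j ^+ 2).

Definition bcoef {R : realFieldType} (j k : R) : R :=
  (2 / 3) * ((1 + k ^+ 2) * (1 + j ^+ 2) * (2 + k ^+ 2 + j ^+ 2))
  / ((3 + k ^+ 2 + j ^+ 2 + k * j) * (3 + k ^+ 2 + j ^+ 2 - k * j)).

(* The tangential sites S^+ are listed by an injective map s : 'I_nu -> nat;
   jbar1 is their maximum. *)
Definition jbar1 (nu : nat) (s : 'I_nu -> nat) : nat := \max_(i < nu) s i.

Definition inV {R : realFieldType} (nu : nat) (r : R) (s : 'I_nu -> nat) : Prop :=
  [/\ injective s,
      (forall i, (0 < s i)%N),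
      (forall i, 1 / r < (s i)%:R),
      (forall i, `|(s i)%:R / (jbar1 s)%:R - 1| <= r) &
      (forall l : 'I_nu -> int, \sum_(i < nu) `|l i| = 4 ->
         \sum_(i < nu) ((s i)%:R / (1 + (s i)%:R ^+ 2)) * (l i)%:~R != 0 :> R)].

Definition Dmat {R : realFieldType} (nu : nat) (s : 'I_nu -> nat) : 'M[R]_nu :=
  \matrix_(i, k) (if i == k then lam (s i)%:R else 0).

Definition Emat {R : realFieldType} (nu : nat) (s : 'I_nu -> nat) : 'M[R]_nu :=
  \matrix_(i, k) (if i == k then
       lam (2 * (s i)%:R) / (2 * lam (s i)%:R - lam (2 * (s i)%:R)) else 0).

(* B_j^k = b_{jk} off the diagonal, 0 on it (row j, column k) *)
Definition Bmat {R : realFieldType} (nu : nat) (s : 'I_nu -> nat) : 'M[R]_nu :=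
  \matrix_(i, k) (if i == k then 0 else bcoef (s i)%:R (s k)%:R).

Definition Amat {R : realFieldType} (nu : nat) (s : 'I_nu -> nat) : 'M[R]_nu :=
  (1 / 2) *: (Dmat s *m Emat s) + Dmat s *m Bmat s.

(* Scale by J := jbar1: every site j has 1 - r <= j/J <= 1 and 1/J < r, and the
   entries of J^-3 A are rational functions of j/J, k/J and 1/J which at
   j/J = k/J = 1, 1/J = 0 give the matrix with 2/9 on the diagonal and 4/9 off it,
   of determinant (-2/9)^(nu-1) (4 nu - 2)/9 <> 0.  Every factor of these rational
   functions lies in [(1-r)^p, (1-r)^-p] for some p <= 16, so each entry of J^-3 A
   is within 32 r of that limit; the determinant being Lipschitz on bounded
   matrices, |det (J^-3 A)| is at least half the limit determinant for r small. *)

From mathcomp Require Import all_boot all_order all_algebra all_fingroup.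
From mathcomp Require Import reals.
From mathcomp Require Import ring lra.
Set Implicit Arguments. Unset Strict Implicit. Unset Printing Implicit Defensive.
Import Order.TTheory GRing.Theory Num.Theory.
Local Open Scope ring_scope.

Definition pinched (R : realFieldType) (w : R) (p : nat) (x : R) :=
  w ^+ p <= x /\ x * w ^+ p <= 1.

Section Pinched.
Variables (R : realFieldType) (w : R).
Hypotheses (w_gt0 : 0 < w) (w_le1 : w <= 1).

Let wX_gt0 p : 0 < w ^+ p. Proof. exact: exprn_gt0. Qed.
Let wX_le1 p : w ^+ p <= 1. Proof. exact: exprn_ile1 (ltW w_gt0) w_le1. Qed.

Lemma pinched_bounds x : w <= x -> x <= 1 -> pinched w 1 x.
Proof.
move=> wx x1; rewrite /pinched expr1; split=> //.
by apply: mulr_ile1 => //; apply: ltW; [apply: lt_le_trans wx|].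
Qed.

Lemma pinchedM p q x y :
  pinched w p x -> pinched w q y -> pinched w (p + q) (x * y).
Proof.
move=> [px Px] [qy Qy]; have := wX_gt0 p; have := wX_gt0 q.
rewrite /pinched exprD; set a := w ^+ p in px Px *; set b := w ^+ q in qy Qy *.
move=> b0 a0; split; first by nra.
have -> : x * y * (a * b) = (x * a) * (y * b) by ring.
by apply: (mulr_ile1 _ _ Px Qy); nra.
Qed.

Lemma pinchedV p x : pinched w p x -> pinched w p x^-1.
Proof.
move=> [px Px]; have x0 : 0 < x := lt_le_trans (wX_gt0 p) px.
split; first by rewrite -(ler_pM2r x0) mulVf ?gt_eqF // mulrC.
by rewrite mulrC ler_pdivrMr // mul1r.
Qed.

Lemma pinched_avg2 p x y :
  pinched w p x -> pinched w p y -> pinched w p ((x + y) / 2).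
Proof. by move=> [? ?] [? ?]; split; lra. Qed.

Lemma pinched_avg3 p x y z :
  pinched w p x -> pinched w p y -> pinched w p z -> pinched w p ((x + y + z) / 3).
Proof. by move=> [? ?] [? ?] [? ?]; split; lra. Qed.

Lemma pinched_sqr_sub_mul x y : w <= x <= 1 -> w <= y <= 1 ->
  pinched w 2 (x * x + y * y - x * y).
Proof.
move=> /andP[wx x1] /andP[wy y1]; have w2 := wX_le1 2.
have ge_xy : x * y <= x * x + y * y - x * y.
  by have := sqr_ge0 (x - y); rewrite expr2; nra.
have x0 : 0 <= x by apply: ltW; apply: lt_le_trans wx.
have y0 : 0 <= y by apply: ltW; apply: lt_le_trans wy.
have le1 : x * x + y * y - x * y <= 1.
  case: (lerP x y) => xy.
    have : 0 <= x * (y - x) by rewrite mulr_ge0 // subr_ge0.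
    nra.
  have : 0 <= y * (x - y) by rewrite mulr_ge0 // subr_ge0 ltW.
  nra.
rewrite /pinched expr2 in w2 *; split.
  by apply: le_trans ge_xy; apply: ler_pM => //; apply: ltW.
by apply: mulr_ile1 => //; nra.
Qed.

Lemma pinchedDl p a z : 0 <= a -> a <= 1 - w -> pinched w p z -> pinched w p.+1 (a + z).
Proof.
move=> a0 aw [pz Pz]; have := wX_gt0 p; have := wX_le1 p.
rewrite /pinched exprS; set b := w ^+ p in pz Pz * => b1 b0.
have bw1 : w * b <= 1 by apply: mulr_ile1 => //; apply: ltW.
split; first by nra.
have : z * b * w <= w by rewrite ler_piMl // ltW.
have : a * (w * b) <= a by rewrite ler_piMr.
by nra.
Qed.

End Pinched.

Lemma bernoulli_ineq (R : realFieldType) (r : R) n : 0 <= r -> r <= 1 ->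
  1 - n%:R * r <= (1 - r) ^+ n.
Proof.
move=> r0 r1; elim: n => [|n IH]; first by rewrite expr0; lra.
have r1' : 0 <= 1 - r by lra.
have := ler_wpM2r r1' IH; rewrite exprSr -natr1.
have : 0 <= n%:R * r * r by rewrite !mulr_ge0.
by lra.
Qed.

Lemma norm_sub1_le_pinched (R : realFieldType) (r x : R) p : 0 <= r -> r <= 1 ->
  p%:R * r <= 1 / 2 -> pinched (1 - r) p x -> `|x - 1| <= 2 * p%:R * r.
Proof.
move=> r0 r1 pr [px Px]; have := bernoulli_ineq p r0 r1.
set a := (1 - r) ^+ p in px Px * => ge_a.
have pr0 : 0 <= p%:R * r by rewrite mulr_ge0.
rewrite ler_norml; apply/andP; split; first by lra.
case: (lerP x 1) => x1; first by lra.
by nra.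
Qed.

Lemma norm_prod_sub_le (R : realFieldType) n (a b : 'I_n -> R) e : 0 <= e ->
  (forall i, `|a i| <= 2) -> (forall i, `|b i| <= 2) -> (forall i, `|a i - b i| <= e) ->
  `|\prod_i a i - \prod_i b i| <= n%:R * 2 ^+ n * e.
Proof.
elim: n a b => [|n IH] a b e0 ha hb hab; first by rewrite !big_ord0 subrr normr0 !mul0r.
rewrite !big_ord_recr /=; set P := \prod_(i < n) _; set Q := \prod_(i < n) _.
set x := a _; set y := b _.
have hPQ : `|P - Q| <= n%:R * 2 ^+ n * e by apply: IH.
have hP : `|P| <= 2 ^+ n.
  have -> : 2 ^+ n = \prod_(i < n) 2 :> R by rewrite prodr_const card_ord.
  by rewrite normr_prod; apply: ler_prod => i _; rewrite normr_ge0 ha.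
have -> : P * x - Q * y = P * (x - y) + (P - Q) * y by ring.
apply: (le_trans (ler_normD _ _)); rewrite !normrM.
have := ler_pM (normr_ge0 _) (normr_ge0 _) hP (hab ord_max).
have := ler_pM (normr_ge0 _) (normr_ge0 _) hPQ (hb ord_max).
have : 0 <= 2 ^+ n * e :> R by rewrite mulr_ge0 ?exprn_ge0.
by rewrite -natr1 exprS; nra.
Qed.

Lemma norm_det_sub_le (R : realFieldType) n (M M0 : 'M[R]_n) e : 0 <= e -> e <= 1 ->
  (forall i j, `|M0 i j| <= 1) -> (forall i j, `|M i j - M0 i j| <= e) ->
  `|\det M - \det M0| <= n`!%:R * (n%:R * 2 ^+ n * e).
Proof.
move=> e0 e1 h0 h; rewrite /determinant -sumrB; apply: (le_trans (ler_norm_sum _ _ _)).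
have -> : n`!%:R * (n%:R * 2 ^+ n * e) = \sum_(s : 'S_n) (n%:R * 2 ^+ n * e) :> R.
  by rewrite sumr_const card_Sn mulr_natl.
apply: ler_sum => s _.
rewrite -mulrBr normrM normr_sign mul1r; apply: norm_prod_sub_le => // i.
- have := ler_normD (M0 i (s i)) (M i (s i) - M0 i (s i)).
  by rewrite addrC subrK; have := h i (s i); have := h0 i (s i); lra.
- by have := h0 i (s i); lra.
Qed.

Lemma det_ge_half_of_close (R : realFieldType) n (M M0 : 'M[R]_n) e : 0 <= e -> e <= 1 ->
  (forall i j, `|M0 i j| <= 1) -> (forall i j, `|M i j - M0 i j| <= e) ->
  n`!%:R * (n%:R * 2 ^+ n) * e <= `|\det M0| / 2 -> `|\det M0| / 2 <= `|\det M|.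
Proof.
move=> e0 e1 h0 h small; have := norm_det_sub_le e0 e1 h0 h; rewrite !mulrA in small *.
have := ler_normD (\det M0 - \det M) (\det M); rewrite subrK.
rewrite distrC; lra.
Qed.

Lemma scalar_add_const_mx_det_neq0 (F : fieldType) n (a b : F) :
  a != 0 -> a + n%:R * b != 0 -> \det (a%:M + const_mx b : 'M_n) != 0.
Proof.
move=> a0 ab0; set c := - (b / (a * (a + n%:R * b))).
(* Sherman-Morrison: the inverse of a rank-one perturbation of a%:M *)
have inv : (a%:M + const_mx b) *m (a^-1%:M + const_mx c) = 1%:M :> 'M_n.
  have const_mulmx : (const_mx b : 'M_n) *m (const_mx c : 'M_n) = const_mx (b * c *+ n).
    apply/matrixP => i j; rewrite !mxE; under eq_bigr do rewrite !mxE.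
    by rewrite sumr_const card_ord.
  rewrite mulmxDl !mulmxDr const_mulmx !mul_mx_scalar !mul_scalar_mx.
  apply/matrixP => i j; rewrite !mxE -mulr_natr /c.
  by case: (i == j); rewrite /= ?mulr1n ?mulr0n; field; apply/andP.
move/(congr1 determinant): inv; rewrite det_mulmx det1 => /eqP.
by apply: contraTneq => ->; rewrite mul0r eq_sym oner_eq0.
Qed.

Definition limit_mx (R : realFieldType) n : 'M[R]_n :=
  \matrix_(i, k) (if i == k then 2 / 9 else 4 / 9).

Lemma det_limit_mx_neq0 (R : realFieldType) n : (0 < n)%N -> \det (limit_mx R n) != 0.
Proof.
move=> n0; have n1 : 1 <= n%:R :> R by rewrite ler1n.
have -> : limit_mx R n = (- (2 / 9))%:M + const_mx (4 / 9).
  by apply/matrixP => i j; rewrite !mxE; case: (i == j); rewrite /= ?mulr1n ?mulr0n; lra.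
by apply: scalar_add_const_mx_det_neq0; apply/eqP; lra.
Qed.

Lemma norm_limit_mx_le1 (R : realFieldType) n i j : `|limit_mx R n i j| <= 1.
Proof. by rewrite mxE; case: eqP => _; rewrite ger0_norm; lra. Qed.

Lemma lam_diag_scaled (R : realFieldType) (j J : R) : 0 < j -> 0 < J ->
  J^-1 ^+ 3 * (1 / 2 * (lam j * (lam (2 * j) / (2 * lam j - lam (2 * j))))) =
  2 / 9 * ((j / J)^-1 * (4 * J^-1 ^+ 2 + j / J * (j / J)) * (J^-1 ^+ 2 + j / J * (j / J))).
Proof.
move=> j0 J0; have h1 : 1 + j ^+ 2 != 0 by apply/lt0r_neq0; nra.
have h2 : 1 + (2 * j) ^+ 2 != 0 by apply/lt0r_neq0; nra.
have -> : 2 * lam j - lam (2 * j) = 18 * j ^+ 3 / ((1 + j ^+ 2) * (1 + (2 * j) ^+ 2)).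
  by rewrite /lam; field; rewrite h1 h2.
by rewrite /lam; field; rewrite h1 h2 !gt_eqF.
Qed.

Lemma lam_bcoef_scaled (R : realFieldType) (j k J : R) : 0 < j -> 0 < k -> 0 < J ->
  J^-1 ^+ 3 * (lam j * bcoef j k) =
  4 / 9 * (j / J * (4 * J^-1 ^+ 2 + j / J * (j / J)) * (J^-1 ^+ 2 + k / J * (k / J))
    * (J^-1 ^+ 2 + (j / J * (j / J) + k / J * (k / J)) / 2)
    / ((J^-1 ^+ 2 + (j / J * (j / J) + k / J * (k / J) + j / J * (k / J)) / 3)
       * (3 * J^-1 ^+ 2 + (j / J * (j / J) + k / J * (k / J) - j / J * (k / J))))).
Proof.
move=> j0 k0 J0; have h1 : 1 + j ^+ 2 != 0 by apply/lt0r_neq0; nra.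
rewrite /lam /bcoef; field.
by apply/and4P; split; rewrite ?gt_eqF //; nra.
Qed.

Lemma AmatE (R : realFieldType) nu (s : 'I_nu -> nat) i k :
  Amat (R := R) s i k = if i == k then
    1 / 2 * (lam (s i)%:R * (lam (2 * (s i)%:R) / (2 * lam (s i)%:R - lam (2 * (s i)%:R))))
  else lam (s i)%:R * bcoef (s i)%:R (s k)%:R.
Proof.
have DE : Dmat (R := R) s = diag_mx (\row_i lam (s i)%:R).
  by apply/matrixP => a b; rewrite !mxE; case: eqP => [->|]; rewrite ?mulr1n ?mulr0n.
by rewrite /Amat DE !mul_diag_mx !mxE; case: eqP => [->|_]; rewrite ?mulr0 ?addr0 ?add0r.
Qed.

Lemma pinched_add_small (R : realFieldType) (r t a z : R) p :
  0 <= t -> t <= r -> r <= 1 / 32 -> 0 <= a -> a <= 4 * t ^+ 2 ->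
  pinched (1 - r) p z -> pinched (1 - r) p.+1 (a + z).
Proof.
move=> t0 tr r32 a0 a4; have r0 := le_trans t0 tr.
apply: pinchedDl => //; [lra | lra | have -> : 1 - (1 - r) = r by ring].
have := ler_pM t0 t0 tr tr.
have : 0 <= r * (1 - 32 * r) by rewrite mulr_ge0 // subr_ge0; lra.
by rewrite expr2 in a4; lra.
Qed.

Lemma norm_scaled_sub_le_pinched (R : realFieldType) (r c F : R) p :
  0 <= r -> r <= 1 / 32 -> (p <= 16)%N -> 0 <= c -> pinched (1 - r) p F ->
  `|c * F - c| <= 32 * c * r.
Proof.
move=> r0 r32 p16 c0 pF; have r1 : r <= 1 by lra.
have p16R : p%:R <= 16 :> R by rewrite (ler_nat R p 16).
have pr16 := ler_wpM2r r0 p16R.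
have pr : p%:R * r <= 1 / 2 by lra.
have -> : c * F - c = c * (F - 1) by ring.
rewrite normrM ger0_norm //; apply: le_trans (ler_wpM2l c0 (norm_sub1_le_pinched r0 r1 pr pF)) _.
have -> : 32 * c * r = c * (32 * r) by ring.
by apply: ler_wpM2l; lra.
Qed.

Lemma diag_entry_close (R : realFieldType) (r t x : R) :
  0 < r -> r <= 1 / 32 -> 0 <= t -> t <= r -> 1 - r <= x -> x <= 1 ->
  `|2 / 9 * (x^-1 * (4 * t ^+ 2 + x * x) * (t ^+ 2 + x * x)) - 2 / 9| <= 32 * r.
Proof.
move=> r0 r32 t0 tr xl xu; have w0 : 0 < 1 - r by lra.
have w1 : 1 - r <= 1 by lra.
have t20 := sqr_ge0 t.
have px : pinched (1 - r) 1 x := pinched_bounds w0 w1 xl xu.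
have pxx : pinched (1 - r) 2 (x * x) := pinchedM w0 px px.
have add_t := pinched_add_small t0 tr r32.
have pF : pinched (1 - r) 7 (x^-1 * (4 * t ^+ 2 + x * x) * (t ^+ 2 + x * x)).
  apply: (@pinchedM _ _ w0 4); last by apply: add_t pxx; lra.
  by apply: (@pinchedM _ _ w0 1); [exact: pinchedV | apply: add_t pxx; lra].
by apply: le_trans (norm_scaled_sub_le_pinched (ltW r0) r32 _ _ pF) _ => //; lra.
Qed.

Lemma offdiag_entry_close (R : realFieldType) (r t x y : R) :
  0 < r -> r <= 1 / 32 -> 0 <= t -> t <= r ->
  1 - r <= x -> x <= 1 -> 1 - r <= y -> y <= 1 ->
  `|4 / 9 * (x * (4 * t ^+ 2 + x * x) * (t ^+ 2 + y * y) * (t ^+ 2 + (x * x + y * y) / 2)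
      / ((t ^+ 2 + (x * x + y * y + x * y) / 3) * (3 * t ^+ 2 + (x * x + y * y - x * y))))
    - 4 / 9| <= 32 * r.
Proof.
move=> r0 r32 t0 tr xl xu yl yu; have w0 : 0 < 1 - r by lra.
have w1 : 1 - r <= 1 by lra.
have t20 := sqr_ge0 t.
have px : pinched (1 - r) 1 x := pinched_bounds w0 w1 xl xu.
have py : pinched (1 - r) 1 y := pinched_bounds w0 w1 yl yu.
have pxx : pinched (1 - r) 2 (x * x) := pinchedM w0 px px.
have pyy : pinched (1 - r) 2 (y * y) := pinchedM w0 py py.
have pxy : pinched (1 - r) 2 (x * y) := pinchedM w0 px py.
have pQ : pinched (1 - r) 2 (x * x + y * y - x * y).
  by apply: pinched_sqr_sub_mul => //; apply/andP.
have add_t := pinched_add_small t0 tr r32.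
have pF : pinched (1 - r) 16
    (x * (4 * t ^+ 2 + x * x) * (t ^+ 2 + y * y) * (t ^+ 2 + (x * x + y * y) / 2)
     / ((t ^+ 2 + (x * x + y * y + x * y) / 3) * (3 * t ^+ 2 + (x * x + y * y - x * y)))).
  apply: (@pinchedM _ _ w0 10); last apply/pinchedV/(@pinchedM _ _ w0 3) => //.
  - apply: (@pinchedM _ _ w0 7); last by apply: add_t (pinched_avg2 pxx pyy); lra.
    apply: (@pinchedM _ _ w0 4); last by apply: add_t pyy; lra.
    by apply: (@pinchedM _ _ w0 1) => //; apply: add_t pxx; lra.
  - by apply: add_t (pinched_avg3 pxx pyy pxy); lra.
  - by apply: add_t pQ; lra.
by apply: le_trans (norm_scaled_sub_le_pinched (ltW r0) r32 _ _ pF) _ => //; lra.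
Qed.

Lemma scaled_Amat_close (R : realFieldType) nu (s : 'I_nu -> nat) (r : R) :
  (0 < nu)%N -> 0 < r -> r <= 1 / 32 -> (forall i, 1 / r < (s i)%:R) ->
  (forall i, `|(s i)%:R / (jbar1 s)%:R - 1| <= r) ->
  forall i k, `|((jbar1 s)%:R^-1 ^+ 3 *: Amat s) i k - limit_mx R nu i k| <= 32 * r.
Proof.
move=> nu0 r0 r32 s_large s_near i k; set J : R := (jbar1 s)%:R.
have s_le_J j : (s j)%:R <= J by rewrite ler_nat; apply: leq_bigmax.
have s_gt0 j : 0 < (s j)%:R :> R by apply: lt_trans (s_large j); rewrite divr_gt0.
have J0 : 0 < J := lt_le_trans (s_gt0 (Ordinal nu0)) (s_le_J _).
have t_le : J^-1 <= r.
  have := lt_le_trans (s_large (Ordinal nu0)) (s_le_J _).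
  by rewrite -[J^-1]div1r ltr_pdivrMr // => /ltW; rewrite ler_pdivrMr // mulrC.
have x_bounds j : 1 - r <= (s j)%:R / J <= 1.
  rewrite ler_pdivrMr // mul1r s_le_J andbT.
  by have := s_near j; rewrite ler_norml => /andP[]; lra.
have t0 : 0 <= J^-1 by rewrite invr_ge0 ltW.
have /andP[xl xu] := x_bounds i; rewrite mxE AmatE mxE.
have [_|_] /= := eqVneq i k.
  by rewrite lam_diag_scaled //; apply: diag_entry_close.
have /andP[yl yu] := x_bounds k.
by rewrite lam_bcoef_scaled //; apply: offdiag_entry_close.
Qed.

Theorem lemma4p1 (R : realType) (nu : nat) (hnu : (2 <= nu)%N) :
  exists r0 cstar : R, 0 < r0 /\ 0 < cstar /\
    forall (r : R) (s : 'I_nu -> nat), 0 < r -> r <= r0 -> inV r s ->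
      cstar * ((jbar1 s)%:R ^+ (3 * nu)) <= `|\det (Amat (R := R) s)|.
Proof.
have nu0 : (0 < nu)%N by apply: leq_trans hnu.
set d := `|\det (limit_mx R nu)|; set K : R := nu`!%:R * (nu%:R * 2 ^+ nu).
have d0 : 0 < d by rewrite normr_gt0 det_limit_mx_neq0.
have K0 : 0 < K by rewrite !mulr_gt0 ?ltr0n ?fact_gt0 ?exprn_gt0.
exists (Num.min (1 / 32) (d / (64 * K))), (d / 2); split; last split.
- by rewrite lt_min; apply/andP; split; [lra | rewrite divr_gt0 // mulr_gt0 // ltr0n].
- by rewrite divr_gt0.
move=> r s r0; rewrite le_min => /andP[r32 rK] [_ s_pos s_large s_near _].
set J : R := (jbar1 s)%:R.
have J0 : 0 < J by rewrite ltr0n (leq_trans (s_pos (Ordinal nu0))) ?leq_bigmax.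
have small : K * (32 * r) <= d / 2.
  have := ler_wpM2l (ltW K0) rK.
  have -> : K * (d / (64 * K)) = d / 64 by field; rewrite gt_eqF.
  by lra.
have lower : d / 2 <= `|\det (J^-1 ^+ 3 *: Amat s)|.
  apply: det_ge_half_of_close (@norm_limit_mx_le1 R nu) _ small; first by lra.
  - by lra.
  - exact: scaled_Amat_close.
have -> : \det (Amat s) = J ^+ (3 * nu) * \det (J^-1 ^+ 3 *: Amat s).
  by rewrite detZ mulrA -exprM exprVn mulfV ?mul1r // expf_neq0 // gt_eqF.
rewrite normrM (ger0_norm (exprn_ge0 _ (ltW J0))) [X in _ <= X]mulrC.
by rewrite ler_pM2r // exprn_gt0.
Qed.
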